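(* Let $n=ks\ge 2$ with $k,s$ positive integers and $k<n$, and let $\mathcal{C}$ be an optimum distance full flag code on $\mathbb{F}_q^n$ whose $k$-projected code $\mathcal{C}_k$ is a $k$-spread of $\mathbb{F}_q^n$. If $n\neq 3$, then $s=2$.
   Context: $q$ is a prime power. For subspaces $\mathcal{U},\mathcal{V}$ of $\mathbb{F}_q^n$, $d_S(\mathcal{U},\mathcal{V})=\dim(\mathcal{U}+\mathcal{V})-\dim(\mathcal{U}\cap\mathcal{V})$. A full flag on $\mathbb{F}_q^n$ is a tuple $(\mathcal{F}_1,\ldots,\mathcal{F}_{n-1})$ of subspaces with $\mathcal{F}_1\subsetneq\cdots\subsetneq\mathcal{F}_{n-1}$ and $\dim\mathcal{F}_i=i$. A full flag code is a set $\mathcal{C}$ of at least two full flags; its distance $d_f(\mathcal{C})$ is the minimum over distinct $\mathcal{F},\mathcal{F}'\in\mathcal{C}$ of $\sum_i d_S(\mathcal{F}_i,\mathcal{F}'_i)$; it is an optimum distance full flag code if $d_f(\mathcal{C})=2\left(\sum_{i\le\lfloor n/2\rfloor} i+\sum_{i>\lfloor n/2\rfloor}^{n-1}(n-i)\right)$. The $i$-projected code is $\mathcal{C}_i=\{\mathcal{F}_i:\mathcal{F}\in\mathcal{C}\}$. A $k$-spread of $\mathbb{F}_q^n$ ($k\mid n$) is a set of $k$-dimensional subspaces pairwise intersecting trivially, of cardinality $(q^n-1)/(q^k-1)$ (equivalently, partitioning the nonzero vectors of $\mathbb{F}_q^n$). *)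

From HB Require Import structures.
From mathcomp Require Import all_boot all_order all_algebra all_field.
Set Implicit Arguments. Unset Strict Implicit. Unset Printing Implicit Defensive.
Import GRing.Theory.
Local Open Scope ring_scope.

(* Ambient space F_q^n is 'rV[F]_n, subspaces are {vspace 'rV[F]_n}.
   A full flag (F_1, ..., F_{n-1}) is represented by the sequence
   [:: F_1; ...; F_{n-1}] of length n-1; flag_at t i = F_i. *)

Section FlagDefs.
Variables (F : finFieldType) (n : nat).
Local Notation sp := {vspace 'rV[F]_n}.

Definition flag_at (t : seq sp) (i : nat) : sp := nth 0%VS t i.-1.

Definition subspace_dist (U V : sp) : nat := (\dim (U + V) - \dim (U :&: V))%N.

Definition is_full_flag (t : seq sp) : Prop :=
  [/\ size t = n.-1,
      forall i, (1 <= i < n)%N -> \dim (flag_at t i) = i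
    & forall i, (1 <= i)%N -> (i.+1 < n)%N ->
        (flag_at t i <= flag_at t i.+1)%VS /\ flag_at t i != flag_at t i.+1].

Definition flag_dist (t t' : seq sp) : nat :=
  (\sum_(1 <= i < n) subspace_dist (flag_at t i) (flag_at t' i))%N.

Definition is_full_flag_code (C : seq sp -> Prop) : Prop :=
  (forall t, C t -> is_full_flag t) /\
  exists t t', [/\ C t, C t' & t <> t'].

Definition code_dist_is (C : seq sp -> Prop) (d : nat) : Prop :=
  (exists t t', [/\ C t, C t', t <> t' & flag_dist t t' = d]) /\
  (forall t t', C t -> C t' -> t <> t' -> (d <= flag_dist t t')%N).

Definition max_flag_dist : nat :=
  (2 * (\sum_(1 <= i < (n./2).+1) i + \sum_((n./2).+1 <= i < n) (n - i)))%N.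

Definition is_optimum_distance_ffc (C : seq sp -> Prop) : Prop :=
  is_full_flag_code C /\ code_dist_is C max_flag_dist.

Definition projected_code (C : seq sp -> Prop) (i : nat) : sp -> Prop :=
  fun U => exists t, C t /\ flag_at t i = U.

(* k-spread: k-dim subspaces pairwise trivially intersecting, of cardinality
   (q^n - 1)/(q^k - 1), q = #|F|; the cardinality is expressed by a
   duplicate-free enumeration of the set. *)
Definition is_spread (k : nat) (S : sp -> Prop) : Prop :=
  [/\ (forall U, S U -> \dim U = k),
      (forall U V, S U -> S V -> U <> V -> (U :&: V = 0)%VS)
    & exists s : seq sp, [/\ uniq s, (forall U, S U <-> U \in s)
        & size s = ((#|F| ^ n - 1) %/ (#|F| ^ k - 1))%N]].

End FlagDefs.

From HB Require Import structures.
From mathcomp Require Import all_boot all_order all_algebra all_field.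
From mathcomp Require Import zify.
Set Implicit Arguments. Unset Strict Implicit. Unset Printing Implicit Defensive.
Import GRing.Theory.
Local Open Scope ring_scope.

(* Suppose s <> 2, so that k + 1 <= n/2.  Optimality forces every pair of
   distinct flags of the code to be at maximal distance in every coordinate,
   so their (k+1)-dimensional subspaces meet trivially.  Pick a flag F and a
   vector v in F_{k+1} outside F_k.  Counting shows that a spread covers all
   nonzero vectors, so v lies in F'_k for some flag F', necessarily different
   from F; but then the nonzero vector v lies in F_{k+1} and F'_{k+1}. *)

Lemma mem_bigcup_seq (T : finType) (I : eqType) (s : seq I) (A : I -> {set T}) x :
  (x \in \bigcup_(i <- s) A i) = has (fun i => x \in A i) s.
Proof. by elim: s => [|i s IHs]; rewrite ?big_nil ?big_cons ?inE //= IHs. Qed.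

Lemma card_bigcup_seq_disjoint (T : finType) (I : eqType) (s : seq I)
    (A : I -> {set T}) :
  uniq s -> {in s &, forall i j, i != j -> [disjoint A i & A j]} ->
  #|\bigcup_(i <- s) A i| = (\sum_(i <- s) #|A i|)%N.
Proof.
elim: s => [|i s IHs] /=; first by rewrite !big_nil cards0.
case/andP => i_notin_s uniq_s disjA.
rewrite !big_cons -IHs //; last by move=> j l js ls; apply: disjA; rewrite inE ?js ?ls orbT.
apply/eqP; rewrite (leq_card_setU _ _).2; apply/pred0P => x /=.
apply/andP => -[xAi]; rewrite mem_bigcup_seq => /hasP [j js xAj].
have ij : i != j by apply: contraNneq i_notin_s => ->.
have js' : j \in i :: s by rewrite inE js orbT.
by rewrite (disjointFr (disjA i j (mem_head _ _) js' ij) xAi) in xAj.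
Qed.

Lemma leq_sum_eq (I : eqType) (r : seq I) (E1 E2 : I -> nat) :
  (forall i, i \in r -> E1 i <= E2 i)%N ->
  (\sum_(i <- r) E2 i <= \sum_(i <- r) E1 i)%N ->
  forall i, i \in r -> E1 i = E2 i.
Proof.
move=> le12 le_sum i ir; apply/eqP; rewrite eqn_leq le12 //=.
have : (\sum_(j <- r | j \in r) (E2 j - E1 j) == 0)%N.
  by rewrite sumnB // -!big_seq subn_eq0.
by rewrite sum_nat_seq_eq0 => /allP /(_ i ir); rewrite ir subn_eq0.
Qed.

Lemma ltn_half_mul (k s : nat) :
  (0 < k)%N -> (2 < s)%N -> (k * s != 3)%N -> (k < (k * s)./2)%N.
Proof. by move=> k_gt0 s_gt2 ks_neq3; rewrite -divn2; nia. Qed.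

Section Flags.
Variables (F : finFieldType) (n : nat).
Local Notation sp := {vspace 'rV[F]_n}.

Definition nonzero_vecs (U : sp) : {set 'rV[F]_n} := [set x in U] :\ 0.

Lemma card_nonzero_vecs (U : sp) : #|nonzero_vecs U| = (#|F| ^ \dim U - 1)%N.
Proof.
have := cardsD1 0 [set x in U]; rewrite inE mem0v cardsE card_vspace => ->.
by rewrite add1n subn1.
Qed.

Lemma spread_cover (k : nat) (S : sp -> Prop) (v : 'rV[F]_n) :
  (k %| n)%N -> is_spread k S -> v != 0 -> exists2 U, S U & v \in U.
Proof.
move=> k_dvd_n [dimS capS [s [uniq_s memS size_s]]] v_neq0.
set q := #|F|.
have dvd_q : (q ^ k - 1 %| q ^ n - 1)%N.
  case/dvdnP: k_dvd_n => m ->; rewrite mulnC expnM -{2}(exp1n m) subn_exp.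
  by rewrite dvdn_mulr.
have card_cover : #|\bigcup_(U <- s) nonzero_vecs U| = (q ^ n - 1)%N.
  rewrite card_bigcup_seq_disjoint //; last first.
    move=> U V /memS SU /memS SV /eqP UV; apply/pred0P => x /=.
    rewrite !inE; apply/negbTE/and3P => -[/andP [x_neq0 xU] _ xV].
    by move: x_neq0; rewrite -memv0 -(capS U V SU SV UV) memv_cap xU xV.
  rewrite (eq_big_seq (fun=> (q ^ k - 1)%N)); last first.
    by move=> U /memS SU; rewrite card_nonzero_vecs dimS.
  by rewrite big_const_seq count_predT iter_addn_0 size_s mulnC divnK.
have cover_full : \bigcup_(U <- s) nonzero_vecs U = nonzero_vecs fullv.
  apply/eqP; rewrite eqEcard card_cover card_nonzero_vecs dimvf /dim /= mul1n.
  rewrite leqnn andbT; apply/subsetP => x; rewrite mem_bigcup_seq.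
  by case/hasP => U _; rewrite !inE memvf andbT => /andP [].
have : v \in \bigcup_(U <- s) nonzero_vecs U by rewrite cover_full !inE memvf v_neq0.
by rewrite mem_bigcup_seq => /hasP [U /memS SU]; rewrite !inE => /andP [_ vU]; exists U.
Qed.

Lemma subspace_dist_le (U V : sp) (i : nat) : \dim U = i -> \dim V = i ->
  (subspace_dist U V <= 2 * minn i (n - i))%N.
Proof.
move=> dimU dimV; rewrite /subspace_dist.
have := dimv_sum_cap U V; have := dimvS (subvf (U + V)%VS).
rewrite dimvf /dim /= mul1n dimU dimV; lia.
Qed.

Lemma subspace_dist_double_capv0 (U V : sp) (i : nat) : \dim U = i -> \dim V = i ->
  subspace_dist U V = (2 * i)%N -> (U :&: V = 0)%VS.
Proof.
move=> dimU dimV; rewrite /subspace_dist => dist_UV.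
apply/eqP; rewrite -dimv_eq0; apply/eqP.
have := dimv_sum_cap U V; rewrite dimU dimV; lia.
Qed.

Lemma max_flag_distE :
  max_flag_dist n = (\sum_(1 <= i < n) 2 * minn i (n - i))%N.
Proof.
have [->|n_gt0] := posnP n; first by rewrite /max_flag_dist !big_geq.
rewrite /max_flag_dist [in RHS](@big_cat_nat _ _ _ (n./2).+1) //=; last first.
  by rewrite -divn2; lia.
rewrite mulnDr !big_distrr /=; congr (_ + _); apply: eq_big_nat => i;
  by rewrite -divn2; lia.
Qed.

Lemma full_flag_subv (t : seq sp) (i : nat) : is_full_flag t ->
  (1 <= i)%N -> (i.+1 < n)%N -> (flag_at t i <= flag_at t i.+1)%VS.
Proof. by case=> _ _ chain i_ge1 i_lt; case: (chain i i_ge1 i_lt). Qed.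

Lemma full_flag_step (t : seq sp) (i : nat) : is_full_flag t ->
  (1 <= i)%N -> (i.+1 < n)%N ->
  exists2 v, v \in flag_at t i.+1 & v \notin flag_at t i.
Proof.
case=> _ _ chain i_ge1 i_lt; case: (chain i i_ge1 i_lt) => sub_i neq_i.
by apply/subvPn; apply: contra neq_i => sub_succ; rewrite eqEsubv sub_i.
Qed.

Section OptimumCode.
Variable C : seq sp -> Prop.
Hypothesis optC : is_optimum_distance_ffc C.

Lemma optimum_flag_code_dist (t t' : seq sp) (i : nat) :
  C t -> C t' -> t <> t' -> (1 <= i < n)%N ->
  subspace_dist (flag_at t i) (flag_at t' i) = (2 * minn i (n - i))%N.
Proof.
case: optC => [[fullC _] [_ minC]] Ct Ct' tt' i_range.
have [_ dim_t _] := fullC t Ct; have [_ dim_t' _] := fullC t' Ct'.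
apply: (@leq_sum_eq _ (index_iota 1 n)
  (fun j => subspace_dist (flag_at t j) (flag_at t' j)) (fun j => 2 * minn j (n - j))%N).
- by move=> j; rewrite mem_index_iota => j_range; apply: subspace_dist_le;
    [exact: dim_t | exact: dim_t'].
- by rewrite -max_flag_distE; exact: minC.
- by rewrite mem_index_iota.
Qed.

Lemma optimum_flag_code_capv0 (t t' : seq sp) (i : nat) :
  C t -> C t' -> t <> t' -> (1 <= i <= n./2)%N ->
  (flag_at t i :&: flag_at t' i = 0)%VS.
Proof.
case: optC => [[fullC _] _] Ct Ct' tt' /andP [i_ge1 i_le].
have i_range : (1 <= i < n)%N by move: i_le; rewrite i_ge1 -divn2; lia.
have [_ dim_t _] := fullC t Ct; have [_ dim_t' _] := fullC t' Ct'.
apply: (subspace_dist_double_capv0 (dim_t i i_range) (dim_t' i i_range)).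
by rewrite optimum_flag_code_dist //; move: i_le; rewrite -divn2; lia.
Qed.

Lemma optimum_spread_flag_code_half (k : nat) :
  (k %| n)%N -> is_spread k (projected_code C k) -> (n./2 <= k)%N.
Proof.
move=> k_dvd_n spreadCk; rewrite leqNgt; apply/negP => k_lt.
case: k k_dvd_n spreadCk k_lt => [|k] k_dvd_n spreadCk k_lt.
  by move: k_dvd_n k_lt; rewrite dvd0n => /eqP ->.
have k_succ_lt : (k.+2 < n)%N by move: k_lt; rewrite -divn2; lia.
have [[fullC [t [_ [Ct _ _]]]] _] := optC.
have [v v_succ v_notin] := full_flag_step (fullC t Ct) (ltn0Sn k) k_succ_lt.
have v_neq0 : v != 0 by apply: contraNneq v_notin => ->; rewrite mem0v.
have [_ [t' [Ct' <-]] v_in] := spread_cover k_dvd_n spreadCk v_neq0.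
have tt' : t <> t' by move=> tt'; rewrite tt' v_in in v_notin.
have v_succ' : v \in flag_at t' k.+2.
  exact: subvP (full_flag_subv (fullC t' Ct') (ltn0Sn k) k_succ_lt) _ v_in.
have : v \in (flag_at t k.+2 :&: flag_at t' k.+2)%VS by rewrite memv_cap v_succ.
by rewrite optimum_flag_code_capv0 // ?memv0 ?(negbTE v_neq0).
Qed.

End OptimumCode.
End Flags.

Theorem proposition4p1 (F : finFieldType) (n k s : nat)
  (C : seq {vspace 'rV[F]_n} -> Prop) :
  (2 <= n)%N -> (0 < k)%N -> (0 < s)%N -> n = (k * s)%N -> (k < n)%N ->
  is_optimum_distance_ffc C ->
  is_spread k (projected_code C k) ->
  n <> 3%N -> s = 2%N.
Proof.
move=> _ k_gt0 s_gt0 n_ks k_lt_n optC spreadCk n_neq3.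
have k_dvd_n : (k %| n)%N by rewrite n_ks dvdn_mulr.
have := optimum_spread_flag_code_half optC k_dvd_n spreadCk.
rewrite n_ks in n_neq3 k_lt_n *; apply: contraTeq => s_neq2.
have s_neq1 : s != 1%N by apply: contraTneq k_lt_n => ->; rewrite muln1 ltnn.
have s_gt2 : (2 < s)%N by lia.
by rewrite -ltnNge ltn_half_mul //; apply/eqP.
Qed.
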